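(* Consider the Gaussian crossed effect model with $K=2$, $L=1$ and balanced levels, and suppose that the number of edges of $G_{\boldsymbol{Q}}$ is at least $c_1N$ and at most $c_2 N$ for constants $0<c_1\le c_2$. Then for every ordering of the $M=p+1$ scalar variables in $\boldsymbol{\theta}$, $\mathrm{Cost(SLA)}\ge c\,N\bar n$, where $c>0$ depends only on $c_1$.
   Context: Model: observations $y_j\sim\mathcal{N}(a^{(0)}+a^{(1)}_{i_1[j]}+a^{(2)}_{i_2[j]},\tau^{-1})$, $j=1,\dots,N$, with $a^{(k)}_i\sim\mathcal{N}(0,\tau_k^{-1})$ for $i=1,\dots,I_k$, $k=1,2$, and $a^{(0)}\sim\mathcal{N}(\mu_{pr},T_{pr}^{-1})$; $\boldsymbol{\theta}=(a^{(0)},\boldsymbol{a}^{(1)},\boldsymbol{a}^{(2)})$ has $M=1+p$ entries, $p=I_1+I_2$. Counts $n^{(k)}_i=\#\{j: i_k[j]=i\}$, $n^{(1,2)}_{ij}=\#\{n: i_1[n]=i,i_2[n]=j\}$. The posterior precision $\boldsymbol{Q}$ has entries $\boldsymbol{Q}[a^{(0)},a^{(0)}]=T_{pr}+N\tau$, $\boldsymbol{Q}[a^{(0)},a^{(k)}_i]=n^{(k)}_i\tau$, $\boldsymbol{Q}[a^{(k)}_i,a^{(k)}_i]=\tau_k+n^{(k)}_i\tau$, $\boldsymbol{Q}[a^{(1)}_i,a^{(2)}_j]=n^{(1,2)}_{ij}\tau$, and all other entries zero. $G_{\boldsymbol{Q}}$ is the graph on the variables with an edge iff the corresponding off-diagonal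 entry of $\boldsymbol{Q}$ is nonzero. Balanced levels: $n^{(k)}_i=N/I_k$ for all $k,i$. $\bar n=2N/p$. $\mathrm{Cost(SLA)}$ is the number of floating point operations to compute the Cholesky factor of $\boldsymbol{Q}$ (in the given ordering) by the column recursion $L_{mm}^2=Q_{mm}-\sum_{\ell<m}L_{m\ell}^2$, $L_{jm}=(Q_{jm}-\sum_{\ell<m}L_{j\ell}L_{m\ell})/L_{mm}$ ($j>m$), computing only entries in the potential nonzero pattern (entries $(j,m)$, $j\ge m$, such that $j=m$ or some path from $m$ to $j$ in $G_{\boldsymbol{Q}}$ has all intermediate vertices preceding $m$) and skipping operations with structurally zero entries. *)

From HB Require Import structures.
From mathcomp Require Import all_boot all_order all_algebra all_fingroup.
Set Implicit Arguments. Unset Strict Implicit. Unset Printing Implicit Defensive.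
Import Order.TTheory GRing.Theory Num.Theory.
Local Open Scope ring_scope.

(* Variables theta are indexed by 'I_(1 + I1 + I2) (as nats):                  *)
(*   0            <-> a^(0)                                                    *)
(*   1 .. I1      <-> a^(1)_(v-1)                                              *)
(*   I1+1 .. I1+I2 <-> a^(2)_(v-1-I1)                                          *)

Section Model.
Variables (I1 I2 N : nat) (i1 : 'I_N -> 'I_I1) (i2 : 'I_N -> 'I_I2).

Definition cnt1 (i : nat) : nat := #|[set j : 'I_N | (i1 j : nat) == i]|.
Definition cnt2 (i : nat) : nat := #|[set j : 'I_N | (i2 j : nat) == i]|.
Definition cnt12 (i k : nat) : nat :=
  #|[set j : 'I_N | ((i1 j : nat) == i) && ((i2 j : nat) == k)]|.

Definition blk (v : nat) : nat := if v == 0%N then 0%N else if (v <= I1)%N then 1%N else 2%N.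
Definition lvl (v : nat) : nat := if (v <= I1)%N then v.-1 else (v - 1 - I1)%N.

Variables (R : realFieldType) (tau tau1 tau2 Tpr : R).

Definition Qentry (u v : nat) : R :=
  match blk u, blk v return R with
  | 0%N, 0%N => Tpr + N%:R * tau
  | 0%N, 1%N => (cnt1 (lvl v))%:R * tau
  | 1%N, 0%N => (cnt1 (lvl u))%:R * tau
  | 0%N, 2%N => (cnt2 (lvl v))%:R * tau
  | 2%N, 0%N => (cnt2 (lvl u))%:R * tau
  | 1%N, 1%N => if u == v then tau1 + (cnt1 (lvl u))%:R * tau else 0
  | 2%N, 2%N => if u == v then tau2 + (cnt2 (lvl u))%:R * tau else 0
  | 1%N, 2%N => (cnt12 (lvl u) (lvl v))%:R * tau
  | 2%N, 1%N => (cnt12 (lvl v) (lvl u))%:R * tau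
  | _, _ => 0
  end.

Definition Qmat : 'M[R]_(1 + I1 + I2) := \matrix_(u, v) Qentry u v.

End Model.

Definition num_edges (R : ringType) (M : nat) (Q : 'M[R]_M) : nat :=
  #|[set uv : 'I_M * 'I_M | (uv.1 < uv.2)%N && (Q uv.1 uv.2 != 0)]|.

(* adjacency of G_Q after reordering: position k holds the variable s k *)
Definition adjQ (R : ringType) (M : nat) (Q : 'M[R]_M) (s : {perm 'I_M}) : rel 'I_M :=
  fun k l => (k != l) && (Q (s k) (s l) != 0).

Section Chol.
Variables (M : nat) (adj : rel 'I_M).

Definition restr (m : 'I_M) : rel 'I_M :=
  fun x y => [&& adj x y, (x < m)%N & (y < m)%N].

(* (j, m), j >= m, is in the potential nonzero pattern of L *)
Definition fillP (m j : 'I_M) : bool :=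
  (j == m) ||
  ((m < j)%N &&
    (adj m j ||
     [exists u : 'I_M, exists v : 'I_M,
        [&& adj m u, (u < m)%N, (v < m)%N, connect (restr m) u v & adj v j]])).

(* flop count of the column recursion, restricted to the pattern:
   column m: 1 sqrt + 2 flops (mult, sub) per l < m with L_ml in pattern;
   each pattern entry L_jm, j > m: 1 division + 2 flops per l < m with
   L_jl and L_ml both in the pattern. *)
Definition chol_cost : nat :=
  \sum_(m < M)
    (1 + 2 * #|[set l : 'I_M | (l < m)%N && fillP l m]|
     + \sum_(j < M | (m < j)%N && fillP m j)
         (1 + 2 * #|[set l : 'I_M | [&& (l < m)%N, fillP l j & fillP l m]]|)).

End Chol.

From HB Require Import structures.
From mathcomp Require Import all_boot all_order all_algebra all_fingroup.
From mathcomp Require Import zify ring lra.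
Set Implicit Arguments. Unset Strict Implicit. Unset Printing Implicit Defensive.
Import Order.TTheory GRing.Theory Num.Theory.

(* Let adj be the (symmetric) graph G_Q after reordering and call the entries
   (l, x), l < x, of the potential nonzero pattern of L the fill entries.  Let
   cc l (col_count) be the number of fill entries in column l.  The proof has three steps.
   1. Fill closure: if (l, m) and (l, j) are fill entries with l < m < j, then
      so is (m, j) (both m and j are joined to l through vertices below l).
      Hence every pair {m, j} counted in cc l ^ 2 is charged, in chol_cost, to
      the update of L_jm by column l, which gives  sum_l cc l ^ 2 <= cost.
   2. Every edge of G_Q is a fill entry, so  #edges <= sum_l cc l.
   3. Cauchy-Schwarz:  (sum_l cc l) ^ 2 <= M * sum_l cc l ^ 2.
   Together,  #edges ^ 2 <= M * cost  for every symmetric Q and ordering.  In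
   the crossed effect model M = 1 + p <= 2 p, so with #edges >= c1 N we get
   cost >= (c1 N) ^ 2 / (2 p) = (c1 ^ 2 / 4) * N * nbar. *)

Lemma Qmat_sym (I1 I2 N : nat) (i1 : 'I_N -> 'I_I1) (i2 : 'I_N -> 'I_I2)
  (R : realFieldType) (tau tau1 tau2 Tpr : R) (u v : 'I_(1 + I1 + I2)) :
  Qmat i1 i2 tau tau1 tau2 Tpr u v = Qmat i1 i2 tau tau1 tau2 Tpr v u.
Proof.
rewrite !mxE /Qentry.
case: (blk I1 u) => [|[|[|?]]]; case: (blk I1 v) => [|[|[|?]]] //=;
by case: (eqVneq (u : nat) v) => [->|h]; rewrite // eq_sym (negbTE h).
Qed.

Lemma card_set_sum (T : finType) (P : pred T) :
  #|[set x | P x]| = \sum_x nat_of_bool (P x).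
Proof. by rewrite -sum1dep_card big_mkcond; apply: eq_bigr => x _; case: (P x). Qed.

Lemma sqr_sum_ord (M : nat) (f : 'I_M -> nat) :
  (\sum_(i < M) f i) ^ 2 = \sum_(i < M) f i * f i
     + 2 * \sum_(i < M) \sum_(j < M) nat_of_bool (i < j)%N * (f i * f j).
Proof.
rewrite expnS expn1 big_distrlr /=.
have split_pair (i j : 'I_M) : f i * f j =
   (i < j)%N * (f i * f j) + (j < i)%N * (f j * f i) + (j == i) * (f i * f j).
  rewrite (mulnC (f j)); case: (ltngtP i j) => h.
  - have -> : (j == i) = false by apply/negbTE; rewrite neq_ltn h orbT.
    by rewrite mul1n mul0n !addn0.
  - have -> : (j == i) = false by apply/negbTE; rewrite neq_ltn h.
    by rewrite mul1n !mul0n add0n addn0.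
  - have -> : j = i by apply: val_inj.
    by rewrite eqxx mul0n mul1n add0n.
under eq_bigr do under eq_bigr do rewrite split_pair.
under eq_bigr do rewrite !big_split /=.
rewrite !big_split /= [X in _ + X + _]exchange_big /=.
have -> : \sum_(i < M) \sum_(k < M) (k == i) * (f i * f k) = \sum_(i < M) f i * f i.
  apply: eq_bigr => i _; rewrite (bigD1 i) //= eqxx mul1n big1 ?addn0 // => j /negbTE ->.
  by rewrite mul0n.
by rewrite addnC mul2n -addnn.
Qed.

Lemma sqr_sum_le (M : nat) (c : 'I_M -> nat) :
  (\sum_(i < M) c i) ^ 2 <= M * \sum_(i < M) c i ^ 2.
Proof.
rewrite -(leq_pmul2l (isT : 0 < 2)) expnS expn1 big_distrlr /= big_distrr /=.
have amgm (i j : 'I_M) : 2 * (c i * c j) <= c i ^ 2 + c j ^ 2.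
  by case: (nat_Cauchy (c i) (c j)).
apply: (@leq_trans (\sum_(i < M) \sum_(j < M) (c i ^ 2 + c j ^ 2))).
  by apply: leq_sum => i _; rewrite big_distrr /=; apply: leq_sum => j _.
rewrite [X in X <= _](eq_bigr (fun i => M * c i ^ 2 + \sum_(j < M) c j ^ 2)); last first.
  by move=> i _; rewrite big_split /= sum_nat_const card_ord.
rewrite big_split /= -big_distrr /= sum_nat_const card_ord.
lia.
Qed.

Section FillPattern.
Variables (M : nat) (adj : rel 'I_M).
Hypothesis adj_sym : symmetric adj.

Definition fill_below (l x : 'I_M) : bool := (l < x)%N && fillP adj l x.

Definition col_count (l : 'I_M) : nat := #|[set x | fill_below l x]|.

Lemma restr_sym (m : 'I_M) : symmetric (restr adj m).
Proof.
move=> x y; rewrite /restr adj_sym.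
by case: (x < m)%N; case: (y < m)%N; rewrite ?andbT ?andbF.
Qed.

Lemma fill_witness (l x m : 'I_M) : fill_below l x -> (l < m)%N ->
  exists2 w : 'I_M, adj x w & (w <= l)%N && connect (restr adj m) l w.
Proof.
case/andP=> lx; rewrite /fillP lx /=; case/orP.
  by move/eqP=> e; rewrite e ltnn in lx.
move=> fill_lx lm; case/orP: fill_lx => [alx|].
  by exists l; rewrite 1?adj_sym // leqnn connect0.
case/existsP=> u /existsP [v] /and5P [alu ul vl cuv avx].
exists v; first by rewrite adj_sym.
rewrite ltnW //=; apply: (connect_trans (y := u)).
  by apply: connect1; rewrite /restr alu lm (ltn_trans ul lm).
move: cuv; apply: connect_sub => a b /and3P [ab am bm].
by apply: connect1; rewrite /restr ab (ltn_trans am lm) (ltn_trans bm lm).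
Qed.

Lemma fill_closure (l m j : 'I_M) : (m < j)%N ->
  fill_below l m -> fill_below l j -> fill_below m j.
Proof.
move=> mj flm flj; have lm : (l < m)%N by case/andP: flm.
have [w1 a1 /andP [w1l c1]] := fill_witness flm lm.
have [w2 a2 /andP [w2l c2]] := fill_witness flj lm.
rewrite /fill_below /fillP mj /=; apply/orP; right; apply/orP; right.
apply/existsP; exists w1; apply/existsP; exists w2.
rewrite a1 (leq_ltn_trans w1l lm) (leq_ltn_trans w2l lm) adj_sym a2 andbT /=.
apply: (connect_trans (y := l)) => //.
by rewrite (sym_connect_sym (@restr_sym m)).
Qed.

Definition col_pairs (l : 'I_M) : nat :=
  \sum_(m < M) \sum_(j < M)
     nat_of_bool (m < j)%N * (fill_below l m * fill_below l j).

Lemma col_count_sqr (l : 'I_M) : col_count l ^ 2 = col_count l + 2 * col_pairs l.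
Proof.
rewrite /col_count card_set_sum sqr_sum_ord; congr (_ + _).
by apply: eq_bigr => x _; case: fill_below.
Qed.

(* The same triples, now charged to the update of the entry (j, m). *)
Definition update_triples (m : 'I_M) : nat :=
  \sum_(j < M) \sum_(l < M)
     fill_below m j * nat_of_bool [&& (l < m)%N, fillP adj l j & fillP adj l m].

Lemma column_cost_ge (m : 'I_M) :
  col_count m + 2 * update_triples m <=
  1 + 2 * #|[set l : 'I_M | (l < m)%N && fillP adj l m]|
  + \sum_(j < M | (m < j)%N && fillP adj m j)
      (1 + 2 * #|[set l : 'I_M | [&& (l < m)%N, fillP adj l j & fillP adj l m]]|).
Proof.
rewrite big_split /= sum1dep_card -big_distrr /= -/(fill_below m) -/(col_count m).
apply: leq_trans (leq_addl _ _); rewrite leq_add2l leq_mul2l /=.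
apply: eq_leq; rewrite [RHS]big_mkcond /=.
apply: eq_bigr => j _; rewrite card_set_sum /fill_below.
by case: ((m < j)%N && fillP adj m j); [apply: eq_bigr => l _; rewrite mul1n | rewrite big1].
Qed.

Lemma col_pairs_le_updates :
  \sum_(l < M) col_pairs l <= \sum_(m < M) update_triples m.
Proof.
rewrite /col_pairs /update_triples; under [X in _ <= X]eq_bigr do rewrite exchange_big.
rewrite [X in _ <= X]exchange_big /=.
apply: leq_sum => l _; apply: leq_sum => m _; apply: leq_sum => j _.
case: (boolP (m < j)%N) => mj //=.
case: (boolP (fill_below l m)) => /= flm; last by rewrite muln0.
case: (boolP (fill_below l j)) => /= flj; last by rewrite muln0.
rewrite (fill_closure mj flm flj).
by case/andP: flm => -> ->; case/andP: flj => _ ->.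
Qed.

Lemma chol_cost_ge_sum_sqr : \sum_(l < M) col_count l ^ 2 <= chol_cost adj.
Proof.
under eq_bigr do rewrite col_count_sqr.
rewrite big_split /= -big_distrr /=.
rewrite /chol_cost; apply: (@leq_trans (\sum_(m < M) (col_count m + 2 * update_triples m))); last first.
  by apply: leq_sum => m _; exact: column_cost_ge.
rewrite big_split /= -big_distrr /= leq_add2l leq_mul2l /=.
exact: col_pairs_le_updates.
Qed.

Lemma sum_col_count :
  \sum_(l < M) col_count l = #|[set kl : 'I_M * 'I_M | fill_below kl.1 kl.2]|.
Proof.
rewrite card_set_sum -(pair_bigA _ (fun l j : 'I_M => nat_of_bool (fill_below l j))).
by apply: eq_bigr => l _; rewrite /col_count card_set_sum.
Qed.

End FillPattern.

Lemma num_edges_le_fill (R : nzRingType) (M : nat) (Q : 'M[R]_M)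
  (Q_sym : forall u v, Q u v = Q v u) (s : {perm 'I_M}) :
  num_edges Q <= \sum_(l < M) col_count (adjQ Q s) l.
Proof.
set adj := adjQ Q s; rewrite sum_col_count.
(* an edge {u, v} sits at the positions of u and v, in increasing order *)
pose pos (uv : 'I_M * 'I_M) := let a := (s^-1)%g uv.1 in let b := (s^-1)%g uv.2 in
   if (a < b)%N then (a, b) else (b, a).
have pos_neq (x y : 'I_M) : (x < y)%N -> nat_of_ord ((s^-1)%g x) <> (s^-1)%g y.
  move=> xy /val_inj /perm_inj exy; by rewrite exy ltnn in xy.
rewrite /num_edges -(card_in_imset (f := pos)); last first.
  move=> [u v] [u' v']; rewrite !inE /= => /andP [uv _] /andP [uv' _]; rewrite /pos /=.
  case: (ltngtP ((s^-1)%g u) ((s^-1)%g v)) => h1;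
  case: (ltngtP ((s^-1)%g u') ((s^-1)%g v')) => h2;
  try (by exfalso; apply: (pos_neq _ _ uv)); try (by exfalso; apply: (pos_neq _ _ uv'));
  case=> /perm_inj e1 /perm_inj e2; subst; rewrite ?e1 ?e2 //; lia.
apply: subset_leq_card; apply/subsetP => kl /imsetP [[u v]].
rewrite inE /= => /andP [uv Quv] ->.
have edge_fill (x y : 'I_M) : (x < y)%N -> adj x y -> fill_below adj x y.
  by move=> xy axy; rewrite /fill_below /fillP xy axy orbT.
have ab : (s^-1)%g u != (s^-1)%g v.
  by apply: contraTneq uv => /perm_inj ->; rewrite ltnn.
have aab : adj ((s^-1)%g u) ((s^-1)%g v) by rewrite /adj /adjQ ab !permKV Quv.
have aba : adj ((s^-1)%g v) ((s^-1)%g u).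
  by rewrite /adj /adjQ eq_sym ab !permKV Q_sym Quv.
rewrite /pos /=; case: (ltngtP ((s^-1)%g u) ((s^-1)%g v)) => h; rewrite inE /=.
- exact: edge_fill.
- exact: edge_fill.
- by move: ab; rewrite -val_eqE /= h eqxx.
Qed.

Theorem num_edges_sqr_le_cost (R : nzRingType) (M : nat) (Q : 'M[R]_M)
  (Q_sym : forall u v, Q u v = Q v u) (s : {perm 'I_M}) :
  num_edges Q ^ 2 <= M * chol_cost (adjQ Q s).
Proof.
have adj_sym : symmetric (adjQ Q s) by move=> x y; rewrite /adjQ eq_sym Q_sym.
apply: (@leq_trans ((\sum_(l < M) col_count (adjQ Q s) l) ^ 2)).
  by rewrite leq_sqr num_edges_le_fill.
apply: leq_trans (sqr_sum_le _) _.
by rewrite leq_mul2l chol_cost_ge_sum_sqr ?orbT.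
Qed.

Local Open Scope ring_scope.

Theorem proposition2 (R : realFieldType) (c1 : R) (hc1 : 0 < c1) :
  exists c : R, 0 < c /\
  forall (c2 : R) (I1 I2 N : nat) (i1 : 'I_N -> 'I_I1) (i2 : 'I_N -> 'I_I2)
         (tau tau1 tau2 Tpr : R),
    c1 <= c2 ->
    0 < tau -> 0 < tau1 -> 0 < tau2 -> 0 < Tpr ->
    (* balanced levels: n^(k)_i = N / I_k *)
    (forall i : 'I_I1, (cnt1 i1 i * I1 = N)%N) ->
    (forall i : 'I_I2, (cnt2 i2 i * I2 = N)%N) ->
    c1 * N%:R <= (num_edges (Qmat i1 i2 tau tau1 tau2 Tpr))%:R ->
    (num_edges (Qmat i1 i2 tau tau1 tau2 Tpr))%:R <= c2 * N%:R ->
    forall s : {perm 'I_(1 + I1 + I2)},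
      c * N%:R * (2 * N%:R / (I1 + I2)%:R)
        <= (chol_cost (adjQ (Qmat i1 i2 tau tau1 tau2 Tpr) s))%:R.
Proof.
exists (c1 ^+ 2 / 4); split; first by rewrite divr_gt0 ?exprn_gt0.
move=> c2 I1 I2 N i1 i2 tau tau1 tau2 Tpr _ _ _ _ _ _ _ many_edges _ s.
have := num_edges_sqr_le_cost (Qmat_sym i1 i2 tau tau1 tau2 Tpr) s.
set E := num_edges _ in many_edges *; set C := chol_cost _ => cost_ge.
rewrite -(ler_nat R) natrM natrX -addnA natrD mulr1n in cost_ge.
have [->|p_gt0] := posnP (I1 + I2); first by rewrite invr0 !mulr0.
set P := (I1 + I2)%:R : R in cost_ge *.
have P_ge1 : 1 <= P by rewrite /P ler1n.
have -> : c1 ^+ 2 / 4 * N%:R * (2 * N%:R / P) = (c1 * N%:R) ^+ 2 / (2 * P).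
  by field; rewrite -natrD pnatr_eq0 -lt0n.
rewrite ler_pdivrMr; last by lra.
have edges_sqr : (c1 * N%:R) ^+ 2 <= E%:R ^+ 2.
  by rewrite !expr2 ler_pM // mulr_ge0 // ltW.
have dim_le : (1 + P) * C%:R <= 2 * P * C%:R by rewrite ler_wpM2r //; lra.
lra.
Qed.
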